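(* Let $n=5$, $a=(1,1,1,1,1)$ and $p(x)=\sum_{i=1}^5(x_i^2-1)^2+\big(\sum_{i=1}^5 x_i\big)^2$ for $x\in\mathbb{R}^5$. Then there is no $\epsilon>0$ such that $p(x)-\epsilon$ is a sum of squares of polynomials; that is, the (infeasible) partition instance $\{1,1,1,1,1\}$ is not sos-refutable.
   Context: A partition instance $a_1,\ldots,a_n$ of positive integers is called sos-refutable if there exists $\epsilon>0$ such that $p_a(x)-\epsilon$ is a sum of squares of polynomials, where $p_a(x)=\sum_i(x_i^2-1)^2+(\sum_i a_ix_i)^2$. *)

From mathcomp Require Import all_boot all_algebra.
From mathcomp Require Import reals.
From mathcomp Require Import mpoly.
Set Implicit Arguments. Unset Strict Implicit. Unset Printing Implicit Defensive.
Import GRing.Theory Num.Theory.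
Local Open Scope ring_scope.

Definition is_sos (R : realType) (n : nat) (p : {mpoly R[n]}) : Prop :=
  exists s : seq {mpoly R[n]}, p = \sum_(q <- s) q ^+ 2.

Definition p_a (R : realType) (n : nat) (a : 'I_n -> nat) : {mpoly R[n]} :=
  \sum_(i < n) ('X_i ^+ 2 - 1) ^+ 2 + (\sum_(i < n) (a i)%:R *: 'X_i) ^+ 2.

Definition sos_refutable (R : realType) (n : nat) (a : 'I_n -> nat) : Prop :=
  exists eps : R, 0 < eps /\ is_sos (p_a R a - eps%:MP).

From mathcomp Require Import all_boot all_order all_algebra.
From mathcomp Require Import reals.
From mathcomp Require Import mpoly.
From mathcomp Require Import ring lra zify.
Set Implicit Arguments. Unset Strict Implicit. Unset Printing Implicit Defensive.
Import Order.Theory GRing.Theory Num.Theory.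
Local Open Scope ring_scope.

(* Let L f be the weighted sum of f over the cube {-1,1}^5 with weight 3, -5, 15, 15, -5, 3 at
   the points having 0, ..., 5 coordinates equal to -1.  Then L 1 = 256, L ((x_1 + ... + x_5)^2)
   = 0 and each (x_i^2 - 1)^2 vanishes on the cube, so L (p - eps) = -256 eps < 0.  If
   p - eps = sum q_j^2, leading terms cannot cancel, so every q_j has degree at most 2 and
   restricts to the cube as c + sum a_i x_i + sum w_ij x_i x_j.  For such a function V,
   L (V^2) is an explicit sum of squares of linear forms in (c, a, w), hence L (p - eps) >= 0. *)

Lemma exists_argmax_seq (T : eqType) d (O : orderType d) (f : T -> O) (s : seq T) x :
  x \in s -> exists2 y, y \in s & forall z, z \in s -> (f z <= f y)%O.
Proof.
elim: s x => // y s IH x _.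
case: s IH => [|y1 s] IH; first by exists y => [|z]; rewrite ?mem_seq1 // => /eqP ->.
have [y' y's maxy'] := IH y1 (mem_head _ _).
have [le_yy'|lt_y'y] := leP (f y) (f y').
  exists y' => [|z]; first by rewrite inE y's orbT.
  by rewrite inE => /predU1P [->|/maxy'].
exists y => [|z]; first exact: mem_head.
by rewrite inE => /predU1P [->//|/maxy' le_zy']; apply: le_trans le_zy' (ltW lt_y'y).
Qed.

Section SumOfSquaresDegree.
Variables (R : realDomainType) (n : nat).
Implicit Types p q : {mpoly R[n]}.

Lemma msizeM_le_pred p q : (msize (p * q) <= (msize p + msize q).-1)%N.
Proof.
have [->|p0] := eqVneq p 0; first by rewrite mul0r msize0.
have [->|q0] := eqVneq q 0; first by rewrite mulr0 msize0.
by rewrite msizeM.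
Qed.

Lemma msize_sqr_le p k : (msize p <= k)%N -> (msize (p ^+ 2) <= k.*2.-1)%N.
Proof.
move=> le_pk; rewrite expr2; apply: leq_trans (msizeM_le_pred _ _) _.
by rewrite -!subn1 leq_sub2r // -addnn leq_add.
Qed.

Lemma msize_sos_summand (s : seq {mpoly R[n]}) q : q \in s ->
  ((msize q).*2 <= (msize (\sum_(r <- s) r ^+ 2)).+1)%N.
Proof.
have [->|q0] := eqVneq q 0; first by rewrite msize0.
move=> qs; have /(exists_argmax_seq (@mlead n R))[y] : q \in [seq r <- s | r != 0].
  by rewrite mem_filter q0.
rewrite mem_filter => /andP[y0 ys] maxy.
set m := (mlead y *+ 2)%MM.
have coef_ge0 r : r \in s -> 0 <= (r ^+ 2)@_m.
  move=> rs; have [->|r0] := eqVneq r 0; first by rewrite expr0n mcoeff0.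
  have := maxy r; rewrite mem_filter r0 rs le_eqVlt => /(_ isT) /predU1P [eq_ry|lt_ry].
    by rewrite /m -eq_ry mleadcX sqr_ge0.
  by rewrite mcoeff_gt_mlead // mleadX // /m !mulmS !mulm0n !addm0 ltm_add.
have coef_gt0 : 0 < (\sum_(r <- s) r ^+ 2)@_m.
  rewrite raddf_sum (big_rem y) //=; apply: ltr_pwDl.
    by rewrite /m mleadcX lt_def sqrf_eq0 mleadc_eq0 y0 sqr_ge0.
  by rewrite big_seq_cond sumr_ge0 // => r /andP[/mem_rem /coef_ge0].
have := msize_mdeg_lt (p := \sum_(r <- s) r ^+ 2) (m := m).
rewrite mcoeff_msupp gt_eqF // mdegMn => /(_ isT).
have /lemc_mdeg : (mlead q <= mlead y)%O by apply: maxy; rewrite mem_filter q0 qs.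
by rewrite -(mlead_deg q0); lia.
Qed.

End SumOfSquaresDegree.

Lemma msize_p_a (R : realType) n (a : 'I_n -> nat) (eps : R) :
  (msize (p_a R a - eps%:MP) <= 5)%N.
Proof.
have msize_sqr_X i : (msize ('X_i ^+ 2 : {mpoly R[n]}) <= 3)%N.
  by rewrite mpolyXn msizeX mdegMn mdeg1.
have msize_lin : (msize (\sum_(i < n) (a i)%:R *: 'X_i : {mpoly R[n]}) <= 2)%N.
  apply: leq_trans (msize_sum _ _ _) _; apply/bigmax_leqP_seq => i _ _.
  by apply: leq_trans (msizeZ_le _ _) _; rewrite msizeX mdeg1.
rewrite /p_a; apply: leq_trans (msizeD_le _ _) _; rewrite msizeN msizeC geq_max.
apply/andP; split; last by case: (eps != 0).
apply: leq_trans (msizeD_le _ _) _; rewrite geq_max; apply/andP; split.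
  apply: leq_trans (msize_sum _ _ _) _; apply/bigmax_leqP_seq => i _ _.
  apply: (@msize_sqr_le _ _ _ 3).
  by apply: leq_trans (msizeD_le _ _) _; rewrite msizeN msize1 geq_max msize_sqr_X.
exact: leq_trans (msize_sqr_le msize_lin) _.
Qed.

Lemma pigeonhole5 (e0 e1 e2 e3 e4 : bool) (m0 m1 m2 m3 m4 : nat) :
  (sumn [:: m0; m1; m2; m3; m4] <= 2)%N -> (3 <= count id [:: e0; e1; e2; e3; e4])%N ->
  [|| e0 && (m0 == 0), e1 && (m1 == 0), e2 && (m2 == 0), e3 && (m3 == 0) | e4 && (m4 == 0)]%N.
Proof. by case: e0 e1 e2 e3 e4 => [] [] [] [] [] //=; lia. Qed.

Section Hypercube.
Variable R : realType.

Definition cube_fun := bool -> bool -> bool -> bool -> bool -> R.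

Definition sg (b : bool) : R := if b then 1 else -1.

Definition cube_pt (b0 b1 b2 b3 b4 : bool) : 'I_5 -> R :=
  fun i => sg (nth false [:: b0; b1; b2; b3; b4] i).

Definition restrict (q : {mpoly R[5]}) : cube_fun :=
  fun b0 b1 b2 b3 b4 => q.@[cube_pt b0 b1 b2 b3 b4].

Definition bool_sum (g : bool -> R) : R := g true + g false.

Definition cube_sum (V : cube_fun) : R :=
  bool_sum (fun b0 => bool_sum (fun b1 => bool_sum (fun b2 =>
  bool_sum (fun b3 => bool_sum (fun b4 => V b0 b1 b2 b3 b4))))).

(* [None] marks a coordinate along which a difference is taken, [Some b] a coordinate
   frozen at [b]. *)
Definition diff_at (o : option bool) (g : bool -> R) : R :=
  if o is Some b then g b else g true - g false.

Definition cube_diff (o0 o1 o2 o3 o4 : option bool) (V : cube_fun) : R :=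
  diff_at o0 (fun b0 => diff_at o1 (fun b1 => diff_at o2 (fun b2 =>
  diff_at o3 (fun b3 => diff_at o4 (fun b4 => V b0 b1 b2 b3 b4))))).

(* The restrictions to the cube of polynomials of degree at most 2 are exactly the functions
   all of whose mixed differences of order at least 3 vanish. *)
Definition cube_deg_le2 (V : cube_fun) : Prop :=
  forall o0 o1 o2 o3 o4, (3 <= count (pred1 None) [:: o0; o1; o2; o3; o4])%N ->
  cube_diff o0 o1 o2 o3 o4 V = 0.

Section CubeLinearity.
Variables (V W : cube_fun).
Hypothesis eqVW : forall b0 b1 b2 b3 b4, V b0 b1 b2 b3 b4 = W b0 b1 b2 b3 b4.

Lemma eq_cube_sum : cube_sum V = cube_sum W.
Proof. by rewrite /cube_sum /bool_sum !eqVW. Qed.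

Lemma eq_cube_diff o0 o1 o2 o3 o4 : cube_diff o0 o1 o2 o3 o4 V = cube_diff o0 o1 o2 o3 o4 W.
Proof. by case: o0 o1 o2 o3 o4 => [?|] [?|] [?|] [?|] [?|]; rewrite /= !eqVW. Qed.

End CubeLinearity.

Lemma cube_sum_big (I : Type) (r : seq I) (F : I -> cube_fun) :
  cube_sum (fun b0 b1 b2 b3 b4 => \sum_(i <- r) F i b0 b1 b2 b3 b4) = \sum_(i <- r) cube_sum (F i).
Proof. by rewrite /cube_sum /bool_sum /= !big_split. Qed.

Lemma cube_diff_lin o0 o1 o2 o3 o4 c (V W : cube_fun) :
  cube_diff o0 o1 o2 o3 o4 (fun b0 b1 b2 b3 b4 => c * V b0 b1 b2 b3 b4 + W b0 b1 b2 b3 b4) =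
  c * cube_diff o0 o1 o2 o3 o4 V + cube_diff o0 o1 o2 o3 o4 W.
Proof. by case: o0 o1 o2 o3 o4 => [?|] [?|] [?|] [?|] [?|] /=; ring. Qed.

Lemma cube_diff0 o0 o1 o2 o3 o4 : cube_diff o0 o1 o2 o3 o4 (fun _ _ _ _ _ => 0) = 0.
Proof. by case: o0 o1 o2 o3 o4 => [?|] [?|] [?|] [?|] [?|] /=; ring. Qed.

Lemma cube_diff_prod o0 o1 o2 o3 o4 (u0 u1 u2 u3 u4 : bool -> R) (V : cube_fun) :
  (forall b0 b1 b2 b3 b4, V b0 b1 b2 b3 b4 = u0 b0 * u1 b1 * u2 b2 * u3 b3 * u4 b4) ->
  cube_diff o0 o1 o2 o3 o4 V =
  diff_at o0 u0 * diff_at o1 u1 * diff_at o2 u2 * diff_at o3 u3 * diff_at o4 u4.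
Proof.
move/eq_cube_diff->.
by case: o0 o1 o2 o3 o4 => [?|] [?|] [?|] [?|] [?|] /=; ring.
Qed.

Lemma cube_deg_le2_sum (I : eqType) (r : seq I) (c : I -> R) (F : I -> cube_fun) :
  {in r, forall i, cube_deg_le2 (F i)} ->
  cube_deg_le2 (fun b0 b1 b2 b3 b4 => \sum_(i <- r) c i * F i b0 b1 b2 b3 b4).
Proof.
move=> degF o0 o1 o2 o3 o4 free3; elim: r degF => [|i r IH] degF.
  by rewrite (eq_cube_diff (W := fun _ _ _ _ _ => 0)) ?cube_diff0 // => *; rewrite big_nil.
rewrite (eq_cube_diff (W := fun b0 b1 b2 b3 b4 =>
  c i * F i b0 b1 b2 b3 b4 + \sum_(j <- r) c j * F j b0 b1 b2 b3 b4)) => [|*].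
  2: by rewrite big_cons.
rewrite cube_diff_lin degF ?mem_head // IH ?mulr0 ?add0r // => j jr.
by apply: degF; rewrite inE jr orbT.
Qed.

Lemma cube_deg_le2_monomial (m : 'X_{1..5}) : (mdeg m <= 2)%N -> cube_deg_le2 (restrict 'X_[m]).
Proof.
move=> deg_m o0 o1 o2 o3 o4 free3.
rewrite mdegE !big_ord_recl big_ord0 in deg_m.
erewrite cube_diff_prod; last first.
  move=> b0 b1 b2 b3 b4; rewrite /restrict mevalX !big_ord_recl big_ord0 mulr1 !mulrA /cube_pt /=.
  reflexivity.
by case/orP: (pigeonhole5 deg_m free3) => [|/orP[|/orP[|/orP[]]]] /andP[/eqP-> /eqP->];
  rewrite /= !expr0 subrr ?(mulr0, mul0r).
Qed.

Lemma cube_deg_le2_restrict q : (msize q <= 3)%N -> cube_deg_le2 (restrict q).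
Proof.
move=> size_q o0 o1 o2 o3 o4 free3.
rewrite (eq_cube_diff (W := fun b0 b1 b2 b3 b4 =>
  \sum_(m <- msupp q) q@_m * restrict 'X_[m] b0 b1 b2 b3 b4)) => [|b0 b1 b2 b3 b4].
  apply: cube_deg_le2_sum free3 => m m_q; apply: cube_deg_le2_monomial.
  by have := msize_mdeg_lt m_q; move: size_q; lia.
rewrite {1}[q]mpolyE /restrict (big_morph _ (mevalD _) (meval0 _)).
by apply: eq_bigr => m _; rewrite mevalZ.
Qed.

Lemma third_diff0_corner (f : bool -> bool -> bool -> R) :
  diff_at None (fun x => diff_at None (fun y => diff_at None (fun z => f x y z))) = 0 ->
  f false false false = f true true true - f true true false - f true false true
    - f false true true + f true false false + f false true false + f false false true.
Proof. by rewrite /=; lra. Qed.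

Definition weight (b0 b1 b2 b3 b4 : bool) : R :=
  match count negb [:: b0; b1; b2; b3; b4] with
  | 0%N | 5%N => 3 | 1%N | 4%N => -5 | _ => 15
  end.

Definition matching_spread (w : nat -> nat -> R) (i j k l : nat) : R :=
  (w i j + w k l - w i k - w j l) ^+ 2 + (w i k + w j l - w i l - w j k) ^+ 2 +
  (w i l + w j k - w i j - w k l) ^+ 2.

Definition quad (c : R) (a : nat -> R) (w : nat -> nat -> R) (b0 b1 b2 b3 b4 : bool) : R :=
  let x i := sg (nth false [:: b0; b1; b2; b3; b4] i) in
  c + \sum_(i < 5) a i * x i + \sum_(j < 5) \sum_(i < j) w i j * x i * x j.

Lemma cube_sum_weight_quad c a w :
  cube_sum (fun b0 b1 b2 b3 b4 => weight b0 b1 b2 b3 b4 * quad c a w b0 b1 b2 b3 b4 ^+ 2) =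
  64 * \sum_(j < 5) \sum_(i < j) (a i - a j) ^+ 2 +
  16 * (4 * c - \sum_(j < 5) \sum_(i < j) w i j) ^+ 2 +
  40 * (matching_spread w 1 2 3 4 + matching_spread w 0 2 3 4 + matching_spread w 0 1 3 4 +
        matching_spread w 0 1 2 4 + matching_spread w 0 1 2 3).
Proof.
(* The moments of [weight] on the characters x^S are 256, -64, 96 for |S| = 0, 2, 4 and 0 for
   odd |S|; splitting the resulting 16 x 16 moment matrix along the isotypic components of the
   action of S_5 gives the three groups of squares. *)
erewrite eq_cube_sum; last first.
  by move=> b0 b1 b2 b3 b4; rewrite /quad !big_ord_recr !big_ord0 /=; reflexivity.
by rewrite /cube_sum /bool_sum /weight /matching_spread !big_ord_recr !big_ord0 /=; ring.
Qed.

Lemma cube_deg_le2_quad V : cube_deg_le2 V ->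
  exists c a w, forall b0 b1 b2 b3 b4, V b0 b1 b2 b3 b4 = quad c a w b0 b1 b2 b3 b4.
Proof.
move=> degV; pose T := Some true; pose F := Some false.
(* Express V at the sixteen points with at least three false coordinates through its values on
   the Hamming ball of radius 2 around (true, ..., true). *)
have /= e0 := third_diff0_corner (f := fun x y z => V true true x y z) (degV T T None None None isT).
have /= e1 := third_diff0_corner (f := fun x y z => V true x true y z) (degV T None T None None isT).
have /= e2 := third_diff0_corner (f := fun x y z => V true x y true z) (degV T None None T None isT).
have /= e3 := third_diff0_corner (f := fun x y z => V true x y z true) (degV T None None None T isT).
have /= e4 := third_diff0_corner (f := fun x y z => V x true true y z) (degV None T T None None isT).
have /= e5 := third_diff0_corner (f := fun x y z => V x true y true z) (degV None T None T None isT).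
have /= e6 := third_diff0_corner (f := fun x y z => V x true y z true) (degV None T None None T isT).
have /= e7 := third_diff0_corner (f := fun x y z => V x y true true z) (degV None None T T None isT).
have /= e8 := third_diff0_corner (f := fun x y z => V x y true z true) (degV None None T None T isT).
have /= e9 := third_diff0_corner (f := fun x y z => V x y z true true) (degV None None None T T isT).
have /= e10 := third_diff0_corner (f := fun x y z => V true x y z false) (degV T None None None F isT).
have /= e11 := third_diff0_corner (f := fun x y z => V x true y z false) (degV None T None None F isT).
have /= e12 := third_diff0_corner (f := fun x y z => V x y true z false) (degV None None T None F isT).
have /= e13 := third_diff0_corner (f := fun x y z => V x y z true false) (degV None None None T F isT).
have /= e14 := third_diff0_corner (f := fun x y z => V x y z false true) (degV None None None F T isT).
have /= e15 := third_diff0_corner (f := fun x y z => V x y z false false) (degV None None None F F isT).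
(* Witness: V = g0 + sum g_i t_i + sum G_ij t_i t_j in the indicators t_i = (1 - x_i) / 2 of the
   false coordinates, rewritten in the x_i. *)
pose V_at (U : pred nat) := V (~~ U 0%N) (~~ U 1%N) (~~ U 2%N) (~~ U 3%N) (~~ U 4%N).
pose g i := V_at (pred1 i) - V_at pred0.
pose G (i j : nat) := if i == j then 0
  else V_at (pred2 i j) - V_at (pred1 i) - V_at (pred1 j) + V_at pred0.
exists ((4 * V_at pred0 + 2 * \sum_(i < 5) g i + \sum_(j < 5) \sum_(i < j) G i j) / 4).
exists (fun i => - (2 * g i + \sum_(j < 5) G i j) / 4), (fun i j => G i j / 4).
move=> b0 b1 b2 b3 b4.
rewrite /quad !big_ord_recr !big_ord0 /= /G /g /V_at /=.
case: b0 b1 b2 b3 b4 => [] [] [] [] [];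
  rewrite ?(e15, e10, e11, e12, e13, e14, e0, e1, e2, e3, e4, e5, e6, e7, e8, e9) /sg; lra.
Qed.

Lemma cube_sum_weight_sqr_ge0 V : cube_deg_le2 V ->
  0 <= cube_sum (fun b0 b1 b2 b3 b4 => weight b0 b1 b2 b3 b4 * V b0 b1 b2 b3 b4 ^+ 2).
Proof.
move=> /cube_deg_le2_quad[c [a [w Vq]]].
rewrite (eq_cube_sum (W := fun b0 b1 b2 b3 b4 =>
  weight b0 b1 b2 b3 b4 * quad c a w b0 b1 b2 b3 b4 ^+ 2)) => [|*]; last by rewrite Vq.
rewrite cube_sum_weight_quad /matching_spread.
apply: addr_ge0; [apply: addr_ge0|]; apply: mulr_ge0 => //.
- by apply: sumr_ge0 => j _; apply: sumr_ge0 => i _; apply: sqr_ge0.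
- exact: sqr_ge0.
- by rewrite !addr_ge0 ?sqr_ge0.
Qed.

Lemma restrict_p_a (eps : R) b0 b1 b2 b3 b4 :
  restrict (p_a R (fun _ : 'I_5 => 1%N) - eps%:MP) b0 b1 b2 b3 b4 =
  (sg b0 + sg b1 + sg b2 + sg b3 + sg b4) ^+ 2 - eps.
Proof.
have sg_sqr b : sg b * sg b = 1 by case: b; rewrite /sg ?mulrNN mulr1.
rewrite /restrict /p_a !big_ord_recl !big_ord0 !expr2.
rewrite !(mevalB, mevalD, mevalM, meval1, mevalZ, mevalXU, mevalC, meval0) /cube_pt /= !sg_sqr.
ring.
Qed.

Lemma cube_sum_weight_p_a (eps : R) :
  cube_sum (fun b0 b1 b2 b3 b4 => weight b0 b1 b2 b3 b4 *
    restrict (p_a R (fun _ : 'I_5 => 1%N) - eps%:MP) b0 b1 b2 b3 b4) = - 256 * eps.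
Proof.
rewrite (eq_cube_sum (W := fun b0 b1 b2 b3 b4 => weight b0 b1 b2 b3 b4 *
  ((sg b0 + sg b1 + sg b2 + sg b3 + sg b4) ^+ 2 - eps))) => [|*]; last by rewrite restrict_p_a.
by rewrite /cube_sum /bool_sum /weight /sg /=; ring.
Qed.

Lemma cube_sum_weight_sos (s : seq {mpoly R[5]}) : {in s, forall q, msize q <= 3}%N ->
  0 <= cube_sum (fun b0 b1 b2 b3 b4 =>
         weight b0 b1 b2 b3 b4 * restrict (\sum_(q <- s) q ^+ 2) b0 b1 b2 b3 b4).
Proof.
move=> size_s.
rewrite (eq_cube_sum (W := fun b0 b1 b2 b3 b4 =>
  \sum_(q <- s) weight b0 b1 b2 b3 b4 * restrict q b0 b1 b2 b3 b4 ^+ 2)) => [|b0 b1 b2 b3 b4].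
  rewrite cube_sum_big big_seq sumr_ge0 // => q /size_s /cube_deg_le2_restrict.
  exact: cube_sum_weight_sqr_ge0.
rewrite /restrict (big_morph _ (mevalD _) (meval0 _)) mulr_sumr.
by apply: eq_bigr => q _; rewrite !expr2 mevalM.
Qed.

End Hypercube.

Theorem proposition5p5 (R : realType) :
  ~ sos_refutable R (fun _ : 'I_5 => 1%N).
Proof.
move=> [eps [eps_gt0 [s p_a_sos]]].
have size_s : {in s, forall q, msize q <= 3}%N.
  move=> q /msize_sos_summand; rewrite -p_a_sos => le_q.
  by rewrite -leq_double; apply: leq_trans le_q _; rewrite ltnS msize_p_a.
have := cube_sum_weight_sos size_s.
by rewrite -p_a_sos cube_sum_weight_p_a; lra.
Qed.
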